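(* Let $G$ be a graph that contains no induced $C_5$, no induced bull, and no induced anchor. Then $G$ is pure. Moreover, every shortest odd hole in $G$ is clean.
   Context: All graphs are finite and simple. The bull is the graph consisting of a triangle with two disjoint pendant edges. An anchor is a six-vertex graph consisting of a 4-vertex induced path $P$, a vertex $c$ adjacent to all vertices of $P$, and a vertex $a$ adjacent to no vertex of $P$ (with $a,c$ either adjacent or not). A hole is an induced subgraph isomorphic to a cycle $C_k$ with $k\ge4$; it is odd if $k$ is odd. A shortest odd hole of $G$ is an odd hole of minimum length. A hole $C$ in $G$ is clean if for every $v\in V(G)\setminus V(C)$, the set of neighbours of $v$ in $V(C)$ is contained in the vertex set of some two-edge path of $C$. $G$ is pure if either $G$ contains no odd hole, or $G$ contains a shortest odd hole that is clean. *)

From mathcomp Require Import all_boot.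
Set Implicit Arguments. Unset Strict Implicit. Unset Printing Implicit Defensive.

Definition simple_graph (T : finType) (e : rel T) : Prop :=
  symmetric e /\ irreflexive e.

Definition induced_copy (H T : finType) (eH : rel H) (e : rel T) (f : H -> T) : Prop :=
  injective f /\ forall x y : H, e (f x) (f y) = eH x y.

Definition contains_induced (H T : finType) (eH : rel H) (e : rel T) : Prop :=
  exists f : H -> T, induced_copy eH e f.

Definition edges_rel (n : nat) (s : seq (nat * nat)) : rel 'I_n :=
  fun i j => ((nat_of_ord i, nat_of_ord j) \in s) || ((nat_of_ord j, nat_of_ord i) \in s).

Definition cyc_adj (k : nat) : rel 'I_k :=
  fun i j => (nat_of_ord j == (i.+1 %% k)) || (nat_of_ord i == (j.+1 %% k)).

Definition C5 : rel 'I_5 := @cyc_adj 5.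

Definition bull : rel 'I_5 := @edges_rel 5 [:: (0,1); (1,2); (0,2); (1,3); (2,4)].

(* anchor: induced path 0-1-2-3, c = 4 adjacent to 0,1,2,3; a = 5 adjacent to
   none of 0..3; a and c adjacent iff b *)
Definition anchor (b : bool) : rel 'I_6 :=
  @edges_rel 6 ([:: (0,1); (1,2); (2,3); (4,0); (4,1); (4,2); (4,3)]
               ++ (if b then [:: (4,5)] else [::])).

Definition hole (T : finType) (e : rel T) (k : nat) (c : 'I_k -> T) : Prop :=
  4 <= k /\ induced_copy (@cyc_adj k) e c.

Definition odd_hole (T : finType) (e : rel T) (k : nat) (c : 'I_k -> T) : Prop :=
  hole e c /\ odd k.

Definition has_odd_hole (T : finType) (e : rel T) : Prop :=
  exists k (c : 'I_k -> T), odd_hole e c.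

Definition shortest_odd_hole (T : finType) (e : rel T) (k : nat) (c : 'I_k -> T) : Prop :=
  odd_hole e c /\ forall k' (c' : 'I_k' -> T), odd_hole e c' -> k <= k'.

(* clean: every vertex v outside the hole has its neighbours on the hole
   contained in {c (i-1), c i, c (i+1)} for some i (a two-edge path of C). *)
Definition clean (T : finType) (e : rel T) (k : nat) (c : 'I_k -> T) : Prop :=
  forall v : T, (forall i, c i != v) ->
    exists i : 'I_k, forall j : 'I_k, e v (c j) ->
      [|| nat_of_ord j == nat_of_ord i, nat_of_ord j == (i.+1 %% k)
        | nat_of_ord i == (j.+1 %% k)].

Definition pure (T : finType) (e : rel T) : Prop :=
  ~ has_odd_hole e \/ exists k (c : 'I_k -> T), shortest_odd_hole e c /\ clean e c.

From Stdlib Require Import Classical.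
From Stdlib Require Wf_nat.
From mathcomp Require Import all_boot zify.
Set Implicit Arguments. Unset Strict Implicit. Unset Printing Implicit Defensive.

(* Let C be a shortest odd hole, of length k >= 7 since G has no C5, and let v be a
   vertex off C.  Read the neighbourhood of v along C as a k-periodic boolean
   sequence.  A maximal run of two neighbours gives a bull and a run of four or more
   an anchor; a maximal run of non-neighbours of even length closes with v into an odd
   hole, which is shorter than C unless the run misses only two vertices of C, and
   then v is clean.  So if v is not clean, every maximal run has odd length; since
   the runs alternate around C there is an even number of them, forcing k even.
   If the sequence is constant, v is complete to C (an anchor) or anticomplete to C
   (clean). *)

Lemma flat_between_eq (A : nat -> bool) i j :
  (forall m, i < m < j -> A m = A m.+1) -> forall m, i < m <= j -> A m = A i.+1.
Proof.
move=> flat; elim=> [|m IH] // /andP[im mj].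
have [-> //|m_ne_i] := eqVneq m i.
by rewrite -flat ?IH; lia.
Qed.

Section SwitchParity.
Variables (A : nat -> bool) (k : nat).
Hypothesis k_odd : odd k.
Hypothesis A_periodic : forall n, A (n + k) = A n.
Hypothesis switch_gaps_odd : forall i j, i < j -> A i != A i.+1 -> A j != A j.+1 ->
  (forall m, i < m < j -> A m = A m.+1) -> odd (j - i).
Variable n0 : nat.
Hypothesis switch_n0 : A n0 != A n0.+1.

Lemma switch_after i : exists t, A (i + t) != A (i + t).+1.
Proof.
have A_periodicM q n : A (n + q * k) = A n.
  by elim: q => [|q IH]; rewrite ?addn0 // mulSnr addnA A_periodic.
have i_le_ik : i <= i * k by rewrite leq_pmulr ?odd_gt0.
exists (n0 + i * k - i).
have -> : i + (n0 + i * k - i) = n0 + i * k by lia.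
by rewrite -addSn !A_periodicM.
Qed.

Definition steps_to_switch i := ex_minn (switch_after i).

Lemma steps_to_switchP i :
  A (i + steps_to_switch i) != A (i + steps_to_switch i).+1 /\
  forall s, s < steps_to_switch i -> A (i + s) = A (i + s).+1.
Proof.
rewrite /steps_to_switch; case: ex_minnP => r sw_r r_min; split=> // s s_lt_r.
by apply: contraTeq s_lt_r => sw_s; rewrite -leqNgt r_min.
Qed.

Lemma steps_to_switch_eq i t :
  A (i + t) != A (i + t).+1 -> (forall s, s < t -> A (i + s) = A (i + s).+1) ->
  steps_to_switch i = t.
Proof.
have [sw r_min] := steps_to_switchP i => sw_t t_min.
apply/eqP; rewrite eqn_leq; apply/andP; split; rewrite leqNgt; apply/negP => lt.
- by move: sw_t; rewrite r_min ?eqxx.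
- by move: sw; rewrite t_min ?eqxx.
Qed.

Lemma steps_to_switch0 i : A i != A i.+1 -> steps_to_switch i = 0.
Proof. by move=> sw; apply: steps_to_switch_eq => [|//]; rewrite addn0. Qed.

Lemma steps_to_switchS i : A i = A i.+1 -> steps_to_switch i = (steps_to_switch i.+1).+1.
Proof.
have [sw r_min] := steps_to_switchP i.+1 => flat.
apply: steps_to_switch_eq => [|[|s] lt].
- by rewrite addnS -addSn.
- by rewrite addn0.
- by rewrite addnS -addSn r_min.
Qed.

Lemma steps_to_switch_periodic i : steps_to_switch (i + k) = steps_to_switch i.
Proof.
have [sw r_min] := steps_to_switchP i.
apply: steps_to_switch_eq => [|s lt].
- by rewrite addnAC -addSn !A_periodic.
- by rewrite addnAC -addSn !A_periodic r_min.
Qed.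

Lemma steps_after_switch_even i : A i != A i.+1 -> ~~ odd (steps_to_switch i.+1).
Proof.
have [sw r_min] := steps_to_switchP i.+1 => sw_i.
have := switch_gaps_odd _ sw_i sw.
have -> : i.+1 + steps_to_switch i.+1 - i = (steps_to_switch i.+1).+1 by lia.
apply=> [|m /andP[im mj]]; first by lia.
have -> : m = i.+1 + (m - i.+1) by lia.
by apply: r_min; lia.
Qed.

Lemma switch_absurd : False.
Proof.
(* Runs after a switch have odd length, so the phase flips at every step; after the
   odd period it must both flip and return. *)
pose phase n := odd (steps_to_switch n) (+) A n.
have phase_flip n : phase n.+1 = ~~ phase n.
  rewrite /phase; have [flat|sw] := eqVneq (A n) (A n.+1).
  - by rewrite (steps_to_switchS flat) flat /= addNb negbK.
  - rewrite (steps_to_switch0 sw) (negbTE (steps_after_switch_even sw)) /=.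
    by case: (A n) (A n.+1) sw => [] [].
have phase_odd n : phase n = phase 0 (+) odd n.
  by elim: n => [|n IH]; rewrite ?addbF // phase_flip IH addbN.
have : phase (0 + k) = phase 0 by rewrite /phase steps_to_switch_periodic A_periodic.
by rewrite add0n phase_odd k_odd; case: (phase 0).
Qed.

End SwitchParity.

Lemma odd_switch_gaps_constant (A : nat -> bool) k :
  odd k -> (forall n, A (n + k) = A n) ->
  (forall i j, i < j -> A i != A i.+1 -> A j != A j.+1 ->
     (forall m, i < m < j -> A m = A m.+1) -> odd (j - i)) ->
  forall n, A n = A 0.
Proof.
move=> k_odd A_periodic gaps_odd; elim=> [|n IH] //; rewrite -IH.
have [//|sw] := eqVneq (A n) (A n.+1).
by case: (switch_absurd k_odd A_periodic gaps_odd sw).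
Qed.

(* A path on the positions [Some a], plus an apex [None] joined to the positions
   satisfying [apex]: the shape of [v] together with a stretch of the hole. *)
Definition window_rel (H : Type) (pos : H -> option nat) (apex : nat -> bool) : rel H :=
  fun x y => match pos x, pos y with
  | Some a, Some b => (b == a.+1) || (a == b.+1)
  | Some a, None => apex a
  | None, Some b => apex b
  | None, None => false
  end.

Lemma cyc_adj_window L :
  @cyc_adj L.+2 =2 window_rel (fun x : 'I_L.+2 => if x <= L then Some (x : nat) else None)
                              (fun a => (a == 0) || (a == L)).
Proof.
move=> x y; rewrite /cyc_adj /window_rel.
have := ltn_ord x; have := ltn_ord y.
have wrap : L.+2 %% L.+2 = 0 by rewrite modnn.
case: ifP => xL; case: ifP => yL => y_lt x_lt.
- by rewrite !modn_small //; lia.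
- have -> : y = L.+1 :> nat by lia.
  by rewrite wrap modn_small; [apply/idP/idP; lia | lia].
- have -> : x = L.+1 :> nat by lia.
  by rewrite wrap modn_small; [apply/idP/idP; lia | lia].
- have -> : x = L.+1 :> nat by lia.
  have -> : y = L.+1 :> nat by lia.
  by rewrite wrap.
Qed.

Definition bull_pos (x : 'I_5) : option nat :=
  nth None [:: None; Some 1; Some 2; Some 0; Some 3] x.

Lemma bull_window : bull =2 window_rel bull_pos (fun a => (a == 1) || (a == 2)).
Proof. by do 2![case=> [[|[|[|[|[|?]]]]] ?] //]. Qed.

Lemma bull_pos_inj : injective bull_pos.
Proof.
move=> x y eq_xy; apply: val_inj; move: eq_xy.
by case: x y => [[|[|[|[|[|?]]]]] ?] [[|[|[|[|[|?]]]]] ?].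
Qed.

Definition anchor_pos (x : 'I_6) : option nat :=
  nth None [:: Some 0; Some 1; Some 2; Some 3; None; Some 5] x.

Lemma anchor_window b :
  anchor b =2 window_rel anchor_pos (fun a => (a < 4) || (a == 5) && b).
Proof. by case: b; do 2![case=> [[|[|[|[|[|[|?]]]]]] ?] //]. Qed.

Lemma anchor_pos_inj : injective anchor_pos.
Proof.
move=> x y eq_xy; apply: val_inj; move: eq_xy.
by case: x y => [[|[|[|[|[|[|?]]]]]] ?] [[|[|[|[|[|[|?]]]]]] ?].
Qed.

Lemma modnS_mod m d : (m %% d).+1 %% d = m.+1 %% d.
Proof. by rewrite -addn1 modnDml addn1. Qed.

Section VertexOffHole.
Variables (T : finType) (e : rel T).
Hypotheses (e_sym : symmetric e) (e_irr : irreflexive e).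
Variables (k : nat) (c : 'I_k -> T).
Hypothesis k_ge7 : 7 <= k.
Hypotheses (c_inj : injective c) (c_adj : forall x y, e (c x) (c y) = cyc_adj x y).
Variable v : T.
Hypothesis v_off : forall i, c i != v.

Let k_gt0 : 0 < k := @leq_trans 7 1 k isT k_ge7.

Definition cyc_idx n : 'I_k := Ordinal (ltn_pmod n k_gt0).

Definition nbr n := e v (c (cyc_idx n)).

Lemma cyc_idx_periodic n : cyc_idx (n + k) = cyc_idx n.
Proof. by apply: val_inj; rewrite /= modnDr. Qed.

Lemma nbr_periodic n : nbr (n + k) = nbr n.
Proof. by rewrite /nbr cyc_idx_periodic. Qed.

Lemma cyc_idx_cover i (j : 'I_k) : exists2 m, m < k & cyc_idx (i + m) = j.
Proof.
exists ((j + (k - i %% k)) %% k); first exact: ltn_pmod.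
apply: val_inj; rewrite /= modnDmr {1}(divn_eq i k) -addnA.
have -> : i %% k + (j + (k - i %% k)) = j + k by have := ltn_pmod i k_gt0; lia.
by rewrite modnMDl modnDr modn_small.
Qed.

Lemma cyc_idx_inj i a b : a < k -> b < k -> cyc_idx (i + a) = cyc_idx (i + b) -> a = b.
Proof.
by move=> a_lt b_lt /(congr1 val) /eqP; rewrite /= eqn_modDl !modn_small // => /eqP.
Qed.

Lemma cyc_adj_idx i a b : a.+1 < k -> b.+1 < k ->
  cyc_adj (cyc_idx (i + a)) (cyc_idx (i + b)) = (b == a.+1) || (a == b.+1).
Proof.
move=> a_lt b_lt; rewrite /cyc_adj /=.
by rewrite !modnS_mod -!addnS !eqn_modDl !modn_small //; lia.
Qed.

Lemma contains_window (H : finType) (eH : rel H) (pos : H -> option nat)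
    (apex : nat -> bool) i n :
  n < k -> (forall x a, pos x = Some a -> a < n) -> injective pos ->
  (forall x a, pos x = Some a -> nbr (i + a) = apex a) ->
  eH =2 window_rel pos apex -> contains_induced eH e.
Proof.
move=> n_lt pos_lt pos_inj pos_nbr eH_window.
exists (fun x => if pos x is Some a then c (cyc_idx (i + a)) else v); split.
- move=> x y; case Ex: (pos x) => [a|]; case Ey: (pos y) => [b|] eq_xy; apply: pos_inj.
  + have a_lt := pos_lt _ _ Ex; have b_lt := pos_lt _ _ Ey.
    by rewrite Ex Ey (@cyc_idx_inj i a b) //; [lia | lia | exact: c_inj].
  + by move: (v_off (cyc_idx (i + a))); rewrite eq_xy eqxx.
  + by move: (v_off (cyc_idx (i + b))); rewrite eq_xy eqxx.
  + by rewrite Ex Ey.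
- move=> x y; rewrite eH_window /window_rel.
  case Ex: (pos x) => [a|]; case Ey: (pos y) => [b|].
  + have a_lt := pos_lt _ _ Ex; have b_lt := pos_lt _ _ Ey.
    by rewrite c_adj cyc_adj_idx //; lia.
  + by rewrite e_sym -(pos_nbr _ _ Ex).
  + by rewrite -(pos_nbr _ _ Ey).
  + exact: e_irr.
Qed.

Lemma hole_of_gap i L : 1 < L -> L.+1 < k -> nbr i -> nbr (i + L) ->
  (forall m, 0 < m < L -> ~~ nbr (i + m)) -> exists c' : 'I_L.+2 -> T, hole e c'.
Proof.
move=> L_gt1 L_lt nbr_i nbr_iL gap.
have [c' c'_copy] : contains_induced (@cyc_adj L.+2) e.
  apply: (@contains_window _ _ _ _ i L.+1 L_lt _ _ _ (@cyc_adj_window L)).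
  - by move=> x a; case: ifP => // xL [<-].
  - move=> x y /=; case: (leqP x L) => xL; case: (leqP y L) => yL //.
    + by case=> /val_inj.
    + by move=> _; apply: ord_inj; have := ltn_ord x; have := ltn_ord y; lia.
  - move=> x a; case: ifP => // xL [<-].
    have [->|x_gt0] := posnP x; first by rewrite addn0 nbr_i.
    have [x_lt|x_ge] := ltnP x L.
    + by rewrite (negbTE (gap x _)) ?x_gt0 //; apply/esym/norP; split; lia.
    + have -> : x = L :> nat by lia.
      by rewrite nbr_iL eqxx orbT.
by exists c'; split=> //; lia.
Qed.

Lemma bull_of_run2 i : ~~ nbr i -> nbr (i + 1) -> nbr (i + 2) -> ~~ nbr (i + 3) ->
  contains_induced bull e.
Proof.
move=> /negbTE nbr0 nbr1 nbr2 /negbTE nbr3.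
apply: (@contains_window _ _ _ _ i 4 _ _ bull_pos_inj _ bull_window).
- exact: leq_trans k_ge7.
- by case=> [[|[|[|[|[|?]]]]] ?] a //= [<-].
- by case=> [[|[|[|[|[|?]]]]] ?] a //= [<-]; rewrite ?addn0.
Qed.

Lemma anchor_of_run4 i : nbr i -> nbr (i + 1) -> nbr (i + 2) -> nbr (i + 3) ->
  contains_induced (anchor (nbr (i + 5))) e.
Proof.
move=> nbr0 nbr1 nbr2 nbr3.
apply: (@contains_window _ _ _ _ i 6 _ _ anchor_pos_inj _ (anchor_window _)).
- exact: leq_trans k_ge7.
- by case=> [[|[|[|[|[|[|?]]]]]] ?] a //= [<-].
- by case=> [[|[|[|[|[|[|?]]]]]] ?] a //= [<-]; rewrite ?addn0.
Qed.

Definition clean_at := exists i : 'I_k, forall j : 'I_k, e v (c j) ->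
  [|| nat_of_ord j == nat_of_ord i, nat_of_ord j == (i.+1 %% k)
    | nat_of_ord i == (j.+1 %% k)].

Lemma clean_at_of_nbrs_near i : (forall m, 0 < m < k - 2 -> ~~ nbr (i + m)) -> clean_at.
Proof.
move=> far; exists (cyc_idx (i + (k - 1))) => j.
have [m m_lt <-] := cyc_idx_cover i j => nbr_m.
have m_far : m = 0 \/ k - 2 <= m.
  have [->|m_gt0] := posnP m; [by left | right].
  by rewrite leqNgt; apply: contraL nbr_m => m_lt'; apply: far; rewrite m_gt0.
rewrite /= !modnS_mod.
have [->|[->|->]] : m = 0 \/ m = k - 2 \/ m = k - 1 by lia.
- have -> : (i + (k - 1)).+1 = i + 0 + k by lia.
  by rewrite modnDr eqxx orbT.
- have -> : (i + (k - 2)).+1 = i + (k - 1) by lia.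
  by rewrite eqxx !orbT.
- by rewrite eqxx.
Qed.

Hypothesis k_odd : odd k.
Hypothesis no_bull : ~ contains_induced bull e.
Hypothesis no_anchor : forall b, ~ contains_induced (anchor b) e.
Hypothesis hole_min : forall k' (c' : 'I_k' -> T), odd_hole e c' -> k <= k'.
Hypothesis v_unclean : ~ clean_at.

Lemma nbr_run_odd i j : i < j -> ~~ nbr i -> ~~ nbr j.+1 ->
  (forall m, i < m <= j -> nbr m) -> odd (j - i).
Proof.
move=> ij nbr_i nbr_j1 run; apply/negPn/negP => even_run.
have [run2|run4] : j = i + 2 \/ i + 4 <= j.
  have : j - i != 1 /\ j - i != 3 by split; apply: contraNneq even_run => ->.
  lia.
- apply: no_bull; apply: (bull_of_run2 nbr_i); try (apply: run; lia).
  by rewrite (_ : i + 3 = j.+1) //; lia.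
- by apply: (no_anchor (anchor_of_run4 (i := i.+1) _ _ _ _)); apply: run; lia.
Qed.

Lemma nbr_gap_odd i j : i < j -> nbr i -> nbr j.+1 ->
  (forall m, i < m <= j -> ~~ nbr m) -> odd (j - i).
Proof.
move=> ij nbr_i nbr_j1 gap; apply/negPn/negP => even_gap.
have gap' m : 0 < m < j.+1 - i -> ~~ nbr (i + m) by move=> m_range; apply: gap; lia.
have [short|long] := ltnP (j.+1 - i).+2 k.
- have [|||c' hole_c'] := @hole_of_gap i (j.+1 - i) _ _ nbr_i _ gap'; try lia.
    by rewrite subnKC //; lia.
  have odd_c' : odd (j.+1 - i).+2 by rewrite /= subSn ?(ltnW ij) //= even_gap.
  by have := hole_min (conj hole_c' odd_c'); lia.
- by apply: v_unclean; apply: (clean_at_of_nbrs_near (i := i)) => m m_range; apply: gap; lia.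
Qed.

Lemma nbr_switch_gaps_odd i j : i < j -> nbr i != nbr i.+1 -> nbr j != nbr j.+1 ->
  (forall m, i < m < j -> nbr m = nbr m.+1) -> odd (j - i).
Proof.
move=> ij sw_i sw_j flat; have inside := flat_between_eq flat.
have nbr_i1 : nbr i.+1 = ~~ nbr i by case: (nbr i) (nbr i.+1) sw_i => [] [].
have nbr_j1 : nbr j.+1 = nbr i.
  have : nbr j = nbr i.+1 by apply: inside; lia.
  by case: (nbr i) (nbr i.+1) (nbr j) (nbr j.+1) sw_i sw_j => [] [] [] [].
case: (boolP (nbr i)) => nbr_i.
- by apply: nbr_gap_odd => // [|m /inside ->]; rewrite ?nbr_j1 ?nbr_i1 ?nbr_i.
- by apply: nbr_run_odd => // [|m /inside ->]; rewrite ?nbr_j1 ?nbr_i1.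
Qed.

Lemma unclean_vertex_absurd : False.
Proof.
have nbr_constant := odd_switch_gaps_constant k_odd nbr_periodic nbr_switch_gaps_odd.
case: (boolP (nbr 0)) => nbr0.
- by apply: (no_anchor (anchor_of_run4 (i := 0) _ _ _ _)); rewrite ?nbr_constant.
- by apply: v_unclean; apply: (clean_at_of_nbrs_near (i := 0)) => m _; rewrite nbr_constant.
Qed.

End VertexOffHole.

Lemma shortest_odd_hole_clean (T : finType) (e : rel T) :
  simple_graph e -> ~ contains_induced C5 e -> ~ contains_induced bull e ->
  (forall b, ~ contains_induced (anchor b) e) ->
  forall k (c : 'I_k -> T), shortest_odd_hole e c -> clean e c.
Proof.
move=> [e_sym e_irr] no_C5 no_bull no_anchor k c [[[k_ge4 [c_inj c_adj]] k_odd] hole_min].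
move=> v v_off; apply: NNPP => v_unclean.
have k_ge7 : 7 <= k.
  have [k5|k_ne5] := eqVneq k 5; first by subst k; case: no_C5; exists c.
  have : k != 4 /\ k != 6 by split; apply: contraTneq k_odd => ->.
  lia.
exact: (unclean_vertex_absurd e_sym e_irr k_ge7 c_inj c_adj v_off
          k_odd no_bull no_anchor hole_min v_unclean).
Qed.

Lemma has_odd_hole_shortest (T : finType) (e : rel T) :
  has_odd_hole e -> exists k (c : 'I_k -> T), shortest_odd_hole e c.
Proof.
move=> has_hole.
have [k [[[c hole_c] k_min] _]] := Wf_nat.dec_inh_nat_subset_has_unique_least_element
  (fun n => exists c : 'I_n -> T, odd_hole e c) (fun n => classic _) has_hole.
by exists k, c; split=> // k' c' hole_c'; apply/leP/k_min; exists c'.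
Qed.

Theorem theorem2p1 (T : finType) (e : rel T) :
  simple_graph e ->
  ~ contains_induced C5 e ->
  ~ contains_induced bull e ->
  (forall b : bool, ~ contains_induced (anchor b) e) ->
  pure e /\ (forall k (c : 'I_k -> T), shortest_odd_hole e c -> clean e c).
Proof.
move=> e_simple no_C5 no_bull no_anchor.
have clean_shortest := shortest_odd_hole_clean e_simple no_C5 no_bull no_anchor.
split=> //; case: (classic (has_odd_hole e)) => [has_hole|]; last by left.
have [k [c shortest_c]] := has_odd_hole_shortest has_hole.
by right; exists k, c; split; last exact: clean_shortest.
Qed.
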